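(* In the concrete model, for every integer $m\ge1$ with $2m\le M$ and every $u\in\mathbb{C}$, $$T_{2m}(u)=T_{2m-2}(u)-\frac{u}{2}\{\mathbb{S}_{2m},T_{2m-2}(u)\},\qquad \mathbb{S}_{2m}:=h_{2m-1}+h_{2m}+\bar h_{2m+1},$$ where $\{X,Y\}=XY+YX$.
   Context: Concrete model. Fix an integer $M\ge1$ and complex numbers $b_1,\dots,b_M$. Let $h_1,\dots,h_M$ be elements of a unital associative complex algebra satisfying $h_m^2=b_m^2\mathbb{1}$, $h_mh_{m+1}=-h_{m+1}h_m$, $h_mh_{m+2}=-h_{m+2}h_m$, and $h_mh_l=h_lh_m$ for $|l-m|>2$ (e.g. $h_m=b_m\sigma^z_m\sigma^z_{m+1}\sigma^x_{m+2}$ on a spin chain). Set $h_j:=0$, $b_j:=0$ for $j\le 0$ or $j>M$. Let $\beta_3,\beta_5$ be arbitrary complex numbers and define $\beta_{2m+1}:=\beta_{2m-1}/(b_{2m-4}^2\beta_{2m-3}-b_{2m}^2\beta_{2m-1}+1)$ for $m\ge3$ (denominators assumed nonzero). For $2\le m\le\lfloor M/2\rfloor$ put $\bar h_{2m+1}:=\beta_{2m-1}h_{2m-2}h_{2m-3}h_{2m}$ and $\bar b_{2m+1}:=\beta_{2m-1}b_{2m-2}b_{2m-3}b_{2m}$ (so $\bar h_{2m+1}^2=\bar b_{2m+1}^2\mathbb{1}$); otherwise $\bar h_{2m+1}:=0$, $\bar b_{2m+1}:=0$. For $1\le j\le M$, the model of size $j$ (same couplings) has frustration graph $G_j$ with vertices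 $h_1,\dots,h_j$ and $\bar h_{2m+1}$ for $2\le m\le\lfloor j/2\rfloor$, and edges $h_i\sim h_l$ iff $|i-l|\in\{1,2\}$; $\bar h_{2m-1}\sim h_l$ iff $l\in\{2m-7,2m-5,2m-3,2m-1,2m-2,2m\}$; $\bar h_{2m-1}\sim\bar h_{2m'-1}$ iff $|m-m'|=1$ (adjacent vertices anticommute, non-adjacent distinct ones commute). Charges: $Q_j^{(k)}:=\sum_{S}\prod_{v\in S}v$, the sum over independent sets $S$ of $G_j$ of size $k$ ($Q_j^{(0)}=\mathbb{1}$). Hamiltonian $H_j:=Q_j^{(1)}=\sum_{l=1}^j h_l+\sum_{m=2}^{\lfloor j/2\rfloor}\beta_{2m-1}h_{2m-2}h_{2m-3}h_{2m}$. Transfer matrix $T_j(u):=\sum_{k\ge0}(-u)^kQ_j^{(k)}$ for $u\in\mathbb{C}$, with $T_j(u):=\mathbb{1}$ for $j\le 0$. *)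

From mathcomp Require Import all_boot all_order all_algebra.
From mathcomp Require Import reals.
From mathcomp.real_closed Require Export complex.
Set Implicit Arguments. Unset Strict Implicit. Unset Printing Implicit Defensive.
Import Order.TTheory GRing.Theory Num.Theory.
Local Open Scope ring_scope.

Section Model.
Variables (R : realType) (A : algType R[i]).
Variables (M : nat) (b : nat -> R[i]) (h : nat -> A) (beta3 beta5 : R[i]).

Definition hh (j : nat) : A := if (1 <= j <= M)%N then h j else 0.
Definition bb (j : nat) : R[i] := if (1 <= j <= M)%N then b j else 0.

(* betaS m = beta_{2m+1};  beta_3, beta_5 free, then the recursion for m >= 3 *)
Fixpoint betaS (m : nat) : R[i] :=
  match m with
  | 0 => 0 (* beta_1: never used *)
  | 1 => beta3
  | m'.+1 =>
      match m' with
      | 1 => beta5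
      | _ => betaS m' /
             ((bb (2 * m' - 2))^+2 * betaS m'.-1 - (bb (2 * m' + 2))^+2 * betaS m' + 1)
      end
  end.

(* denominator of beta_{2m+1} (for m >= 3) *)
Definition betaDen (m : nat) : R[i] :=
  (bb (2 * m - 4))^+2 * betaS (m - 2) - (bb (2 * m))^+2 * betaS (m - 1) + 1.

(* hbarS k = \bar h_{2k+1} = beta_{2k-1} h_{2k-2} h_{2k-3} h_{2k}  for 2 <= k <= M/2, else 0 *)
Definition hbarS (k : nat) : A :=
  if (2 <= k <= M./2)%N
  then betaS k.-1 *: (hh (2 * k - 2) * hh (2 * k - 3) * hh (2 * k))
  else 0.

(* Vertices of G_j:  inl i  stands for h_{i+1} (1 <= i+1 <= j),
                     inr m  stands for \bar h_{2(m+2)+1}  (2 <= m+2 <= j/2). *)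
Definition vert (j : nat) : finType := ('I_j + 'I_(j./2 - 1))%type.

Definition vval (j : nat) (v : vert j) : A :=
  match v with
  | inl i => hh (val i).+1
  | inr m => hbarS (val m + 2)
  end.

(* adjacency between h_l and \bar h_{2k+1} (paper: \bar h_{2m-1} ~ h_l iff
   l in {2m-7,2m-5,2m-3,2m-1,2m-2,2m}; here 2m-1 = 2k+1) *)
Definition adj_hbar_h (k l : nat) : bool :=
  [|| (l + 5 == 2 * k)%N, (l + 3 == 2 * k)%N, (l + 1 == 2 * k)%N,
      (l == 2 * k + 1)%N, (l == 2 * k)%N | (l == 2 * k + 2)%N].

Definition adj (j : nat) (v w : vert j) : bool :=
  match v, w with
  | inl i, inl i' =>
      let l := (val i).+1 in let l' := (val i').+1 in
      [|| (l == l' + 1)%N, (l == l' + 2)%N, (l' == l + 1)%N | (l' == l + 2)%N]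
  | inr m, inl i => adj_hbar_h (val m + 2) (val i).+1
  | inl i, inr m => adj_hbar_h (val m + 2) (val i).+1
  | inr m, inr m' => ((val m == val m' + 1) || (val m' == val m + 1))%N
  end.

Definition independent (j : nat) (S : {set vert j}) : bool :=
  [forall v in S, forall w in S, ~~ adj v w].

(* Q_j^{(k)} : sum over independent sets of size k of the product of their
   vertices (they pairwise commute, so the order of the product is irrelevant) *)
Definition Q (j k : nat) : A :=
  \sum_(S : {set vert j} | independent S && (#|S| == k)%N) \prod_(v in S) vval v.

(* T_j(u) = sum_{k >= 0} (-u)^k Q_j^{(k)}  (Q_j^{(k)} = 0 for k > #|vert j|);
   for j = 0 this is 1. *)
Definition T (j : nat) (u : R[i]) : A :=
  \sum_(k < #|vert j|.+1) (- u) ^+ k *: Q j k.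

End Model.

From mathcomp Require Import all_boot all_order all_algebra zify.
From mathcomp Require Import reals.
From mathcomp.real_closed Require Import complex.
Set Implicit Arguments. Unset Strict Implicit. Unset Printing Implicit Defensive.
Import GRing.Theory.
Local Open Scope ring_scope.

(* T_j(u) is the independence polynomial sum_S (-u)^|S| prod_{v in S} v of
   the frustration graph G_j.  G_2m is G_{2m-2} plus the three vertices
   h_{2m-1}, h_{2m}, hbar_{2m+1}, which form a clique, and the neighbours in
   G_{2m-2} of each new vertex form a clique as well.  Hence an independent set
   of G_2m either lies in G_{2m-2}, or is {v} u S' with v new and S' an
   independent set of G_{2m-2} avoiding the neighbours of v.  Since adjacent
   vertices anticommute and the others commute, v commutes with prod S' when S'
   avoids the neighbours of v and anticommutes with it when S' contains one
   (it cannot contain two).  So in the anticommutator of v with T_{2m-2} the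
   first kind of terms doubles and the second cancels, which is the claim. *)

Section QuasiCommutation.
Variables (R : realType) (A : algType R[i]).

Definition qcomm (x y : A) (c : bool) := x * y = ((-1) ^+ c : R[i]) *: (y * x).

Lemma comm_qcomm x y : x * y = y * x -> qcomm x y false.
Proof. by rewrite /qcomm expr0 scale1r. Qed.

Lemma anticomm_qcomm x y : x * y = - (y * x) -> qcomm x y true.
Proof. by rewrite /qcomm expr1 scaleN1r. Qed.

Lemma qcommMl x y z c d : qcomm x z c -> qcomm y z d -> qcomm (x * y) z (c (+) d).
Proof.
rewrite /qcomm => hx hy.
rewrite -mulrA hy -scalerAr (mulrA x z y) hx -scalerAl scalerA.
by rewrite mulrC -signr_addb mulrA.
Qed.

Lemma qcommMr x y z c d : qcomm x y c -> qcomm x z d -> qcomm x (y * z) (c (+) d).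
Proof.
rewrite /qcomm => hy hz.
rewrite mulrA hy -scalerAl -(mulrA y x z) hz -scalerAr scalerA.
by rewrite -signr_addb mulrA.
Qed.

Lemma qcomm_sym x y c : qcomm x y c -> qcomm y x c.
Proof. by rewrite /qcomm => ->; rewrite scalerA -signr_addb addbb expr0 scale1r. Qed.

Lemma qcomm0l y c : qcomm 0 y c.
Proof. by rewrite /qcomm mul0r mulr0 scaler0. Qed.

Lemma qcomm0r y c : qcomm y 0 c.
Proof. by rewrite /qcomm mul0r mulr0 scaler0. Qed.

Lemma qcommZl a x y c : qcomm x y c -> qcomm (a *: x) y c.
Proof. by rewrite /qcomm => H; rewrite -scalerAl H -scalerAr !scalerA mulrC. Qed.

Lemma qcommZr a x y c : qcomm x y c -> qcomm x (a *: y) c.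
Proof. by move/qcomm_sym/(qcommZl a)/qcomm_sym. Qed.

Lemma qcomm_prod (I : Type) (r : seq I) (P : pred I) (F : I -> A) (c : I -> bool) x :
  (forall i, P i -> qcomm x (F i) (c i)) ->
  qcomm x (\prod_(i <- r | P i) F i) (\big[addb/false]_(i <- r | P i) c i).
Proof.
move=> H; apply: (big_ind2 (fun p d => qcomm x p d)) => //.
  exact/comm_qcomm/commr1.
by move=> ? ? ? ?; apply: qcommMr.
Qed.

Lemma big_perm_comm (I : eqType) (F : I -> A) (s1 s2 : seq I) :
  perm_eq s1 s2 -> {in s1 &, forall i j, F i * F j = F j * F i} ->
  \prod_(i <- s1) F i = \prod_(i <- s2) F i.
Proof.
elim: s1 s2 => [|x s1 IH] s2 hp hc.
  by move: hp; rewrite perm_sym => /perm_nilP ->.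
have xs2 : x \in s2 by rewrite -(perm_mem hp) mem_head.
case/splitPr: xs2 hp => l1 l2 hp.
rewrite big_cat !big_cons /=.
have hp' : perm_eq s1 (l1 ++ l2).
  by rewrite -(perm_cons x) (perm_trans hp) // -cat1s perm_catCA.
have x_comm_l1 : GRing.comm (F x) (\prod_(i <- l1) F i).
  rewrite big_seq; apply: commr_prod => i il1.
  by apply: hc (mem_head _ _) _; rewrite (perm_mem hp) mem_cat il1.
rewrite mulrA -x_comm_l1 -mulrA -big_cat /=; congr (_ * _).
by apply: IH => // a c ha hc'; apply: hc; rewrite inE ?ha ?hc' orbT.
Qed.

Lemma prod_set_seq (V : finType) (S : {set V}) (s : seq V) (F : V -> A) :
  uniq s -> S =i s -> {in S &, forall i j, F i * F j = F j * F i} ->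
  \prod_(v in S) F v = \prod_(v <- s) F v.
Proof.
move=> us hS hc; rewrite -big_filter; apply: big_perm_comm.
  apply: uniq_perm => // [|x]; first by rewrite filter_uniq // index_enum_uniq.
  by rewrite mem_filter mem_index_enum andbT hS.
by move=> i j; rewrite !mem_filter !mem_index_enum !andbT; apply: hc.
Qed.

End QuasiCommutation.

Section IndependencePolynomial.
Variables (R : realType) (A : algType R[i]).

Definition indep (V : finType) (e : rel V) (S : {set V}) : bool :=
  [forall v in S, forall w in S, ~~ e v w].

Lemma indepP (V : finType) (e : rel V) (S : {set V}) :
  reflect (forall v w, v \in S -> w \in S -> ~~ e v w) (indep e S).
Proof.
apply: (iffP forallP) => H.
  by move=> v w hv hw; move: (H v); rewrite hv => /forallP/(_ w); rewrite hw.
move=> v; apply/implyP => hv; apply/forallP => w; apply/implyP => hw.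
exact: H.
Qed.

Definition indep_poly (V : finType) (f : V -> A) (e : rel V) (u : R[i]) : A :=
  \sum_(S : {set V} | indep e S) (- u) ^+ #|S| *: \prod_(v in S) f v.

(* [phi] embeds the graph [e'] on [W], with vertex values [g], into the graph
   [e] on [V]; the vertices outside its image are the new ones. *)
Section CliqueExtension.
Variables (V W : finType) (f : V -> A) (e : rel V) (g : W -> A) (e' : rel W)
  (phi : W -> V) (u : R[i]).
Hypotheses (phi_inj : injective phi) (f_phi : forall w, f (phi w) = g w)
  (e_phi : forall w w', e (phi w) (phi w') = e' w w')
  (qcomm_f : forall v w, qcomm (f v) (f w) (e v w))
  (e_sym : symmetric e) (e_irr : irreflexive e)
  (new_clique : forall v v', v \notin codom phi -> v' \notin codom phi ->
      v != v' -> e v v')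
  (new_nbr_clique : forall v w w', v \notin codom phi -> e v (phi w) ->
      e v (phi w') -> w != w' -> e' w w').

Definition avoids_nbr v (S' : {set W}) := [forall w in S', ~~ e v (phi w)].

Lemma indep_commute (S : {set V}) :
  indep e S -> {in S &, forall i j, f i * f j = f j * f i}.
Proof.
move=> /indepP H i j hi hj; have := qcomm_f i j.
by rewrite /qcomm (negbTE (H i j hi hj)) expr0 scale1r.
Qed.

Lemma indep_imset (S' : {set W}) : indep e (phi @: S') = indep e' S'.
Proof.
apply/indepP/indepP => H.
  by move=> w w' hw hw'; rewrite -e_phi; apply: H; rewrite mem_imset.
by move=> v v' /imsetP[w hw ->] /imsetP[w' hw' ->]; rewrite e_phi; apply: H.
Qed.

Lemma imset_enum_phi (S' : {set W}) :
  phi @: S' =i map phi [seq w <- index_enum W | w \in S'].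
Proof.
move=> v; apply/imsetP/mapP.
  by case=> w hw ->; exists w; rewrite // mem_filter mem_index_enum andbT.
by case=> w; rewrite mem_filter mem_index_enum andbT => hw ->; exists w.
Qed.

Lemma prod_imset (S' : {set W}) :
  indep e' S' -> \prod_(v in phi @: S') f v = \prod_(w in S') g w.
Proof.
move=> hi; rewrite (prod_set_seq _ (imset_enum_phi S')).
- by rewrite big_map big_filter; apply: eq_bigr => w _; exact: f_phi.
- by rewrite map_inj_uniq // filter_uniq // index_enum_uniq.
- by apply: indep_commute; rewrite indep_imset.
Qed.

Lemma sum_indep_sub_codom : \sum_(S : {set V} | indep e S && (S \subset codom phi))
    (- u) ^+ #|S| *: \prod_(v in S) f v = indep_poly g e' u.
Proof.
rewrite (reindex_onto (fun S' : {set W} => phi @: S') (fun S : {set V} => phi @^-1: S)).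
  apply: eq_big => S'.
    have -> : phi @^-1: (phi @: S') = S'.
      by apply/setP => w; rewrite inE mem_imset.
    have -> : phi @: S' \subset codom phi.
      by apply/subsetP => v /imsetP[w _ ->]; exact: codom_f.
    by rewrite indep_imset eqxx !andbT.
  by move=> /andP[/andP[hi _] _]; rewrite card_imset // prod_imset // -indep_imset.
move=> S /andP[_ hsub]; apply/setP => v; apply/imsetP/idP.
  by case=> w; rewrite inE => hw ->.
by move=> hv; case/codomP: (subsetP hsub v hv) => w hvw; exists w; rewrite ?inE -?hvw.
Qed.

Lemma indep_setU1_imset v (S' : {set W}) : v \notin codom phi ->
  indep e (v |: phi @: S') = indep e' S' && avoids_nbr v S'.
Proof.
move=> hv; apply/indepP/andP.
  move=> H; split.
    by rewrite -indep_imset; apply/indepP => x y hx hy; apply: H; rewrite inE ?hx ?hy orbT.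
  apply/forallP => w; apply/implyP => hw; apply: H; first exact: setU11.
  by rewrite inE imset_f ?orbT.
case=> /indepP hi /forallP hn x y; rewrite !inE.
case/predU1P=> [->|/imsetP[w hw ->]]; case/predU1P=> [->|/imsetP[w' hw' ->]].
- by rewrite e_irr.
- exact: (implyP (hn w') hw').
- by rewrite e_sym; exact: (implyP (hn w) hw).
- by rewrite e_phi; apply: hi.
Qed.

Lemma sum_indep_mem_new v : v \notin codom phi ->
  \sum_(S : {set V} | indep e S && (v \in S)) (- u) ^+ #|S| *: \prod_(x in S) f x =
  \sum_(S' : {set W} | indep e' S' && avoids_nbr v S')
      (- u) ^+ #|S'|.+1 *: (f v * \prod_(w in S') g w).
Proof.
move=> hv.
have v_notin_im S' : v \notin phi @: S'.
  by apply: contra hv => /imsetP[w _ ->]; exact: codom_f.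
rewrite (reindex_onto (fun S' : {set W} => v |: phi @: S')
                       (fun S : {set V} => phi @^-1: S)).
  apply: eq_big => S'.
    have -> : phi @^-1: (v |: phi @: S') = S'.
      apply/setP => w; rewrite !inE mem_imset // (_ : phi w == v = false) //.
      by apply: contraNF hv => /eqP <-; exact: codom_f.
    by rewrite setU11 eqxx !andbT indep_setU1_imset.
  move=> /andP[/andP[hi _] _].
  rewrite cardsU1 v_notin_im card_imset // add1n.
  rewrite (@prod_set_seq _ _ _ _ (v :: map phi [seq w <- index_enum W | w \in S'])).
  - by rewrite big_cons big_map big_filter; congr (_ *: (_ * _));
      apply: eq_bigr => w _; exact: f_phi.
  - rewrite cons_uniq map_inj_uniq // filter_uniq ?index_enum_uniq // andbT.
    by rewrite -imset_enum_phi.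
  - by move=> x; rewrite !inE imset_enum_phi.
  - exact: indep_commute.
move=> S /andP[hi hvS]; apply/setP => x; rewrite !inE.
case: (eqVneq x v) => [->|hxv] /=; first by rewrite hvS.
apply/imsetP/idP => [[w]|hx]; first by rewrite inE => hw ->.
have : x \in codom phi.
  apply: contraT => hx'; have exv := new_clique hx' hv hxv.
  by move/indepP: hi => /(_ x v hx hvS); rewrite exv.
by case/codomP => w hxw; exists w; rewrite ?inE -?hxw.
Qed.

Lemma indep_poly_split_new : indep_poly f e u =
  \sum_(S : {set V} | indep e S && (S \subset codom phi)) (- u) ^+ #|S| *: \prod_(x in S) f x
  + \sum_(v | v \notin codom phi)
      \sum_(S : {set V} | indep e S && (v \in S)) (- u) ^+ #|S| *: \prod_(x in S) f x.
Proof.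
have -> : \sum_(v | v \notin codom phi)
      \sum_(S : {set V} | indep e S && (v \in S)) (- u) ^+ #|S| *: \prod_(x in S) f x =
    \sum_(S : {set V} | indep e S) \sum_(v | (v \notin codom phi) && (v \in S))
      (- u) ^+ #|S| *: \prod_(x in S) f x.
  rewrite (exchange_big_dep (indep e)) /=; last by move=> v S _ /andP[].
  by apply: eq_bigr => S hS; apply: eq_bigl => v; rewrite hS.
rewrite [X in _ = X + _]big_mkcondr -big_split /=; apply: eq_bigr => S hi.
case: ifP => hsub.
  rewrite [X in _ + X]big_pred0 ?addr0 // => v; apply/negbTE/andP => [[hv hvS]].
  by have := subsetP hsub v hvS; rewrite (negbTE hv).
case/subsetPn: (negbT hsub) => v0 hv0S hv0.
rewrite [X in _ + X](big_pred1 v0) ?add0r // => v /=; apply/andP/eqP => [[hv hvS]|->//].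
apply/eqP; apply: contraT => hne.
by move/indepP: hi => /(_ v v0 hvS hv0S); rewrite (new_clique hv hv0 hne).
Qed.

Lemma parity_nbr_new v (S' : {set W}) : v \notin codom phi -> indep e' S' ->
  \big[addb/false]_(w in S') e v (phi w) = ~~ avoids_nbr v S'.
Proof.
move=> hv hi; have [avoid|] := boolP (avoids_nbr v S').
  by rewrite big1 // => w hw; apply/negbTE; exact: (implyP (forallP avoid w) hw).
move/forallPn => [w0]; rewrite negb_imply => /andP[hw0 /negPn he0].
rewrite (bigD1 w0) //= he0 big1 // => w /andP[hw hne]; apply/negbTE/negP => he.
by move/indepP: hi => /(_ w w0 hw hw0); rewrite (new_nbr_clique hv he he0 hne).
Qed.

Lemma anticomm_new_indep_poly :
  let N := \sum_(v | v \notin codom phi) f v in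
  indep_poly g e' u - (u / 2) *: (N * indep_poly g e' u + indep_poly g e' u * N) =
  indep_poly g e' u + \sum_(v | v \notin codom phi)
    \sum_(S' : {set W} | indep e' S' && avoids_nbr v S')
      (- u) ^+ #|S'|.+1 *: (f v * \prod_(w in S') g w).
Proof.
move=> N; congr (_ + _).
rewrite /N /indep_poly mulr_suml mulr_sumr -big_split /= -scaleNr scaler_sumr.
apply: eq_bigr => v hv.
rewrite mulr_sumr mulr_suml -big_split /= scaler_sumr big_mkcondr.
apply: eq_bigr => S' hi.
set P := \prod_(w in S') g w.
have hPf : P * f v = (-1) ^+ (~~ avoids_nbr v S') *: (f v * P).
  rewrite -parity_nbr_new //; apply: qcomm_sym; apply: qcomm_prod => w _.
  by rewrite -f_phi; apply: qcomm_f.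
rewrite -scalerAr -scalerAl hPf -scalerDr.
have halve : - (u / 2) * ((- u) ^+ #|S'| * (1 + 1)) = (- u) ^+ #|S'|.+1.
  rewrite -mulr2n exprS mulrCA [RHS]mulrC; congr (_ * _).
  by rewrite mulNr -mulrA mulVf ?mulr1 // Num.Theory.pnatr_eq0.
case: (avoids_nbr v S') => /=.
  by rewrite expr0 scale1r -[X in X + X]scale1r -scalerDl !scalerA halve.
by rewrite expr1 scaleN1r subrr !scaler0.
Qed.

Theorem indep_poly_clique_extension :
  indep_poly f e u = indep_poly g e' u - (u / 2) *:
    ((\sum_(v | v \notin codom phi) f v) * indep_poly g e' u
      + indep_poly g e' u * (\sum_(v | v \notin codom phi) f v)).
Proof.
rewrite anticomm_new_indep_poly indep_poly_split_new sum_indep_sub_codom.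
by congr (_ + _); apply: eq_bigr => v hv; exact: sum_indep_mem_new.
Qed.

End CliqueExtension.
End IndependencePolynomial.

Ltac decide_nat_eqs := repeat match goal with
 | |- context [(?x == ?y)%N] =>
   first [ rewrite (_ : (x == y) = true); last by apply/eqP; lia
         | rewrite (_ : (x == y) = false); last by apply/eqP; lia
         | case: (x =P y) => ? ] end.

Definition hadj (a c : nat) : bool :=
  [|| a == c + 1, a == c + 2, c == a + 1 | c == a + 2]%N.

Lemma hadj_sym a c : hadj a c = hadj c a.
Proof. by rewrite /hadj; lia. Qed.

(* hbar_{2k+1} is a multiple of h_{2k-2} h_{2k-3} h_{2k}: its sign against
   h_l, resp. hbar_{2l+1}, is the parity of the [hadj] between the factors. *)
Lemma hadj_hbar_h k l : (2 <= k)%N ->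
  (hadj (2 * k - 2) l (+) hadj (2 * k - 3) l) (+) hadj (2 * k) l = adj_hbar_h k l.
Proof. by move=> hk; rewrite /hadj /adj_hbar_h; decide_nat_eqs. Qed.

Lemma hadj_hbar_hbar k l : (2 <= k)%N -> (2 <= l)%N ->
 (((hadj (2 * k - 2) (2 * l - 2) (+) hadj (2 * k - 2) (2 * l - 3))
     (+) hadj (2 * k - 2) (2 * l)) (+)
  ((hadj (2 * k - 3) (2 * l - 2) (+) hadj (2 * k - 3) (2 * l - 3))
     (+) hadj (2 * k - 3) (2 * l))) (+)
  ((hadj (2 * k) (2 * l - 2) (+) hadj (2 * k) (2 * l - 3)) (+) hadj (2 * k) (2 * l))
 = (k == l + 1)%N || (l == k + 1)%N.
Proof. by move=> hk hl; rewrite /hadj; decide_nat_eqs. Qed.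

Lemma half_mul2n n : ((2 * n)./2 = n)%N.
Proof. by rewrite mul2n doubleK. Qed.

Lemma half_mul2nD2 n : ((2 * n + 2)./2 = n.+1)%N.
Proof. by rewrite -mulnSr half_mul2n. Qed.

Lemma half_mul2n_sub1_leq n : ((2 * n)./2 - 1 <= (2 * n + 2)./2 - 1)%N.
Proof. by rewrite half_mul2n half_mul2nD2; lia. Qed.

Definition vert_embed n (w : vert (2 * n)) : vert (2 * n + 2) :=
  match w with
  | inl i => inl (widen_ord (leq_addr 2 (2 * n)) i)
  | inr p => inr (widen_ord (half_mul2n_sub1_leq n) p)
  end.

Lemma vert_embed_inj n : injective (@vert_embed n).
Proof. by move=> [i|p] [i'|p'] //= [] /val_inj ->. Qed.

Lemma mem_codom_vert_embed n (v : vert (2 * n + 2)) : (v \in codom (@vert_embed n)) =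
  match v with inl i => (i < 2 * n)%N | inr p => (p < n - 1)%N end.
Proof.
have half_n := half_mul2n n; apply/codomP/idP.
  by case=> [[i|p] ->] /=; [exact: ltn_ord | have := ltn_ord p; lia].
case: v => [i|p] /= hi.
  by exists (inl (Ordinal hi)); congr inl; apply: val_inj.
have hp : (p < (2 * n)./2 - 1)%N by lia.
by exists (inr (Ordinal hp)); congr inr; apply: val_inj.
Qed.

Lemma adj_sym j : symmetric (@adj j).
Proof. by case=> [i|p] [i'|p'] //=; lia. Qed.

Lemma adj_irr j : irreflexive (@adj j).
Proof. by case=> [i|p] /=; lia. Qed.

Lemma vert_embed_new_clique n (v v' : vert (2 * n + 2)) :
  v \notin codom (@vert_embed n) -> v' \notin codom (@vert_embed n) ->
  v != v' -> adj v v'.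
Proof.
have := half_mul2nD2 n.
case: v => [i|i]; case: v' => [i'|i']; rewrite !mem_codom_vert_embed => ? ? ?;
  rewrite {1}/eq_op /= -?val_eqE /= /adj_hbar_h; have := ltn_ord i; have := ltn_ord i'; lia.
Qed.

Lemma vert_embed_new_nbr_clique n (v : vert (2 * n + 2)) (w w' : vert (2 * n)) :
  v \notin codom (@vert_embed n) -> adj v (vert_embed w) -> adj v (vert_embed w') ->
  w != w' -> adj w w'.
Proof.
have := half_mul2n n; have := half_mul2nD2 n.
case: v => [i|i]; case: w => [j|j]; case: w' => [j'|j'];
  rewrite mem_codom_vert_embed /= => ? ? ? nbr_j nbr_j';
  (try rewrite {1}/eq_op /= -?val_eqE /=); rewrite /adj_hbar_h in nbr_j nbr_j' *;
  have := ltn_ord i; have := ltn_ord j; have := ltn_ord j'; lia.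
Qed.

Section ConcreteModel.
Variables (R : realType) (A : algType R[i]) (M : nat) (b : nat -> R[i])
  (h : nat -> A) (beta3 beta5 : R[i]).
Hypotheses
  (hanti1 : forall m : nat, (1 <= m)%N -> (m + 1 <= M)%N ->
     h m * h (m + 1)%N = - (h (m + 1)%N * h m))
  (hanti2 : forall m : nat, (1 <= m)%N -> (m + 2 <= M)%N ->
     h m * h (m + 2)%N = - (h (m + 2)%N * h m))
  (hcomm : forall m l : nat, (1 <= m)%N -> (l <= M)%N -> (m + 2 < l)%N ->
     h m * h l = h l * h m).

Let hbar := hbarS M b h beta3 beta5.
Let val_of j (v : vert j) : A := vval M b h beta3 beta5 v.

Lemma qcomm_hh a c : qcomm (hh M h a) (hh M h c) (hadj a c).
Proof.
wlog: a c / (a <= c)%N.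
  move=> H; have [|hca] := leqP a c; first exact: H.
  by apply: qcomm_sym; rewrite hadj_sym; apply: H; lia.
move=> hac; rewrite /hh; case: ifP => ha; last exact: qcomm0l.
case: ifP => hc; last exact: qcomm0r.
have : c = a \/ c = a + 1 \/ c = a + 2 \/ (a + 2 < c)%N by lia.
case=> [?|[?|[?|hlt]]]; try subst c.
- by rewrite (_ : hadj a a = false); [exact: comm_qcomm | rewrite /hadj; lia].
- by rewrite (_ : hadj _ _ = true); [apply: anticomm_qcomm; apply: hanti1; lia | rewrite /hadj; lia].
- by rewrite (_ : hadj _ _ = true); [apply: anticomm_qcomm; apply: hanti2; lia | rewrite /hadj; lia].
- by rewrite (_ : hadj _ _ = false); [apply: comm_qcomm; apply: hcomm; lia | rewrite /hadj; lia].
Qed.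

Lemma qcomm_hbar_hh k l : qcomm (hbar k) (hh M h l) (adj_hbar_h k l).
Proof.
rewrite /hbar /hbarS; case: ifP => [/andP[hk _]|_]; last exact: qcomm0l.
by apply: qcommZl; rewrite -hadj_hbar_h //; apply: qcommMl; [apply: qcommMl|]; exact: qcomm_hh.
Qed.

Lemma qcomm_hbar k l : qcomm (hbar k) (hbar l) ((k == l + 1)%N || (l == k + 1)%N).
Proof.
rewrite /hbar /hbarS; case: ifP => [/andP[hk _]|_]; last exact: qcomm0l.
case: ifP => [/andP[hl _]|_]; last exact: qcomm0r.
apply/qcommZl/qcommZr; rewrite -hadj_hbar_hbar //.
apply: qcommMl; [apply: qcommMl|];
  by apply: qcommMr; [apply: qcommMr|]; exact: qcomm_hh.
Qed.

Lemma qcomm_vval j (v w : vert j) : qcomm (val_of v) (val_of w) (adj v w).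
Proof.
case: v => [i|p]; case: w => [i'|p'] /=.
- exact: qcomm_hh.
- exact/qcomm_sym/qcomm_hbar_hh.
- exact: qcomm_hbar_hh.
- by rewrite (_ : (_ || _) = (p + 2 == p' + 2 + 1)%N || (p' + 2 == p + 2 + 1)%N);
    [exact: qcomm_hbar | lia].
Qed.

Lemma T_indep_poly j u : T M b h beta3 beta5 j u = indep_poly (@val_of j) (@adj j) u.
Proof.
rewrite /T /indep_poly /Q.
under eq_bigr do rewrite scaler_sumr.
rewrite (exchange_big_dep (@independent j)) /=; last by move=> k S _ /andP[].
apply: eq_bigr => S hi.
rewrite (big_pred1 (Ordinal (leq_ltn_trans (max_card (mem S)) (ltnSn _)))) // => k /=.
by rewrite hi /= -val_eqE /= eq_sym.
Qed.

Lemma sum_new_vert_embed n :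
  \sum_(v | v \notin codom (@vert_embed n)) val_of v =
  hh M h (2 * n + 1) + hh M h (2 * n + 2) + hbar n.+1.
Proof.
rewrite big_sumType /=.
rewrite (eq_bigl (fun i : 'I_(2 * n + 2) => ~~ (i < 2 * n)%N));
  last by move=> i; rewrite mem_codom_vert_embed.
rewrite (eq_bigl (fun p : 'I_((2 * n + 2)./2 - 1) => ~~ (p < n - 1)%N));
  last by move=> p; rewrite mem_codom_vert_embed.
rewrite -(big_mkord (fun i => ~~ (i < 2 * n)%N) (fun i => hh M h i.+1)).
rewrite -(big_mkord (fun p => ~~ (p < n - 1)%N) (fun p => hbar (p + 2))).
rewrite half_mul2nD2 subn1 /=; congr (_ + _).
  rewrite (big_cat_nat (n := 2 * n)) //= ?leq_addr //.
  rewrite [X in X + _]big_nat_cond [X in X + _]big_pred0 ?add0r; last by move=> i /=; lia.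
  rewrite big_mkcond (@eq_big_nat _ _ _ _ _ _ (fun i => hh M h i.+1)); last first.
    by move=> i hi; rewrite ifT //; lia.
  rewrite big_ltn; last by lia.
  rewrite big_ltn; last by lia.
  rewrite big_geq ?addr0; last by lia.
  by rewrite /= addr0 addn1 addn2.
case: n => [|n]; first by rewrite big_geq.
rewrite big_mkcond big_nat_recr //= subn1 /= ltnn /=.
rewrite big_nat_cond big1 ?add0r; first by congr hbar; lia.
by move=> p /andP[/andP[_ hp] _]; rewrite hp.
Qed.

End ConcreteModel.

Theorem mainTheorem4 (R : realType) (A : algType R[i])
  (M : nat) (b : nat -> R[i]) (h : nat -> A) (beta3 beta5 : R[i])
  (hsq : forall m : nat, (1 <= m <= M)%N -> h m * h m = (b m) ^+ 2 *: 1)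
  (hanti1 : forall m : nat, (1 <= m)%N -> (m + 1 <= M)%N ->
     h m * h (m + 1)%N = - (h (m + 1)%N * h m))
  (hanti2 : forall m : nat, (1 <= m)%N -> (m + 2 <= M)%N ->
     h m * h (m + 2)%N = - (h (m + 2)%N * h m))
  (hcomm : forall m l : nat, (1 <= m)%N -> (l <= M)%N -> (m + 2 < l)%N ->
     h m * h l = h l * h m)
  (hden : forall m : nat, (3 <= m)%N -> betaDen M b beta3 beta5 m != 0)
  (m : nat) (hm1 : (1 <= m)%N) (hmM : (2 * m <= M)%N) (u : R[i]) :
  let SS := hh M h (2 * m - 1)%N + hh M h (2 * m)%N + hbarS M b h beta3 beta5 m in
  let T' := T M b h beta3 beta5 (2 * m - 2)%N u in
  T M b h beta3 beta5 (2 * m)%N u = T' - (u / 2) *: (SS * T' + T' * SS).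
Proof.
move=> SS T'; rewrite /SS /T' {SS T'}.
case: m hm1 hmM => [//|n] _ _.
have -> : (2 * n.+1 = 2 * n + 2)%N by lia.
have -> : (2 * n + 2 - 2 = 2 * n)%N by lia.
have -> : (2 * n + 2 - 1 = 2 * n + 1)%N by lia.
rewrite !T_indep_poly -sum_new_vert_embed.
apply: indep_poly_clique_extension.
- exact: vert_embed_inj.
- by case.
- by case=> [?|?] [?|?].
- exact: qcomm_vval.
- exact: adj_sym.
- exact: adj_irr.
- exact: vert_embed_new_clique.
- exact: vert_embed_new_nbr_clique.
Qed.
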